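(* Let $k\ge4$ be even and let $(i,j\mid s,t)\in\mathcal{O}(\mathbb{C},k)$ be normalized, i.e. $0<i<j\le s<t\le k/2$. Then $j-i<t-s$, and consequently $j+s<i+t<k$.
   Context: $\phi=\exp(2\pi\mathrm{i}/k)$, $\mathbf{k}=\{1,\dots,k-1\}$, $\mathbf{k}_0=\{0,\dots,k-1\}$. A quadruple $(i,j\mid s,t)\in\mathbf{k}^4$ with $i\ne s$ is an overlap if $\phi^\omega(\phi^j-1)(\phi^s-1)=(\phi^i-1)(\phi^t-1)$ for some $\omega\in\mathbf{k}_0$; it is trivial if one of $i\equiv\pm j$, $j\equiv\pm t$, $t\equiv\pm s$, $s\equiv\pm i\pmod k$ holds, nontrivial otherwise. $\mathcal{O}(\mathbb{C},k)$ is the set of nontrivial overlaps. *)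

From mathcomp Require Import all_boot all_algebra.
From mathcomp Require Import all_classical all_reals all_analysis.
From mathcomp Require Import complex.
Set Implicit Arguments. Unset Strict Implicit. Unset Printing Implicit Defensive.
Import GRing.Theory Num.Theory.
Local Open Scope ring_scope.
Local Open Scope complex_scope.

(* phi = exp(2 pi i / k) = cos(2 pi / k) + i sin(2 pi / k). *)
Definition phi (R : realType) (k : nat) : R[i] :=
  cos (2 * pi / k%:R) +i* sin (2 * pi / k%:R).

Definition in_k (k x : nat) : bool := (0 < x)%N && (x < k)%N.

Definition is_overlap (R : realType) (k i j s t : nat) : Prop :=
  [/\ [&& in_k k i, in_k k j, in_k k s & in_k k t], i != s &
   (exists2 w : nat, (w < k)%N &
     phi R k ^+ w * (phi R k ^+ j - 1) * (phi R k ^+ s - 1)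
     = (phi R k ^+ i - 1) * (phi R k ^+ t - 1))].

Definition cong_pm (k a b : nat) : bool :=
  (a == b %[mod k]) || ((a + b) %% k == 0)%N.

Definition trivial_quad (k i j s t : nat) : bool :=
  [|| cong_pm k i j, cong_pm k j t, cong_pm k t s | cong_pm k s i].

Definition in_O (R : realType) (k i j s t : nat) : Prop :=
  is_overlap R k i j s t /\ ~~ trivial_quad k i j s t.

From mathcomp Require Import all_boot all_algebra.
From mathcomp Require Import all_classical all_reals all_analysis.
From mathcomp Require Import complex.
From mathcomp Require Import ring lra zify.

(* Write b = pi/k, so that phi = cos (2b) +i* sin (2b).  Taking
   squared moduli in the overlap identity removes the unit factor phi^w, and
   |phi^n - 1|^2 = 4 sin (n b)^2, so an overlap (i,j | s,t) forces
     sin (j b)^2 * sin (s b)^2 = sin (i b)^2 * sin (t b)^2.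
   Suppose the quadruple is normalized but j - i >= t - s, i.e. i + t <= j + s.
   With A, B, C, D = j b, s b, i b, t b, the product-to-sum formula
     2 sin X sin Y = cos (Y - X) - cos (X + Y)
   and the monotonicity of cos on [0, pi] give sin C sin D < sin A sin B,
   because B - A < D - C and C + D <= A + B, all these angles lying in
   [0, pi].  Both products are nonnegative, so their squares differ too: a
   contradiction. *)

Import GRing.Theory Num.Theory order.Order.TTheory.
Local Open Scope ring_scope.
Local Open Scope complex_scope.

Section UnitCircle.
Variable R : realType.

Definition sqnorm (z : R[i]) : R := let: a +i* b := z in a ^+ 2 + b ^+ 2.

Lemma sqnormM (z w : R[i]) : sqnorm (z * w) = sqnorm z * sqnorm w.
Proof. by case: z => a b; case: w => c d /=; ring. Qed.

Definition cis (x : R) : R[i] := cos x +i* sin x.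

Lemma cisD (x y : R) : cis x * cis y = cis (x + y).
Proof. by rewrite /cis cosD sinD /=; congr (_ +i* _); ring. Qed.

Lemma cisX (x : R) (n : nat) : cis x ^+ n = cis (n%:R * x).
Proof.
elim: n => [|n IHn]; first by rewrite expr0 mul0r /cis cos0 sin0.
by rewrite exprS IHn cisD mulrS mulrDl mul1r.
Qed.

Lemma sqnorm_cis (x : R) : sqnorm (cis x) = 1.
Proof. exact: cos2Dsin2. Qed.

Lemma sqnorm_cis_sub1 (y : R) : sqnorm (cis (y *+ 2) - 1) = 4 * sin y ^+ 2.
Proof.
by rewrite /= oppr0 addr0 sin2cos2 cos_mulr2n cos2sin2 mulr2n; ring.
Qed.

Lemma overlap_sin_sqr (k i j s t : nat) : is_overlap R k i j s t ->
  let b : R := pi / k%:R in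
  sin (j%:R * b) ^+ 2 * sin (s%:R * b) ^+ 2
  = sin (i%:R * b) ^+ 2 * sin (t%:R * b) ^+ 2.
Proof.
move=> [_ _ [w _ Ew]] b.
have phiE n : phi R k ^+ n = cis ((n%:R * b) *+ 2).
  by rewrite /phi -/(cis _) cisX /b mulr2n; congr cis; ring.
have := congr1 sqnorm Ew.
rewrite !sqnormM !phiE sqnorm_cis !sqnorm_cis_sub1 mul1r => E.
apply: (mulfI (_ : 4 * 4 != 0 :> R)); first by rewrite mulf_neq0 ?pnatr_eq0.
transitivity (4 * sin (j%:R * b) ^+ 2 * (4 * sin (s%:R * b) ^+ 2)); first by ring.
by rewrite E; ring.
Qed.

End UnitCircle.

Section SineProducts.
Variable R : realType.

(* If the angle pair (A, B) is "closer together" than (C, D) while having at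
   least as large a sum, all within [0, pi], then sin C sin D < sin A sin B:
   by 2 sin X sin Y = cos (Y - X) - cos (X + Y) and the strict decrease of
   cos on [0, pi]. *)
Lemma sin_mul_lt (A B C D : R) :
  0 <= A -> A <= B -> 0 <= C -> B - A < D - C -> D - C <= pi ->
  C + D <= A + B -> A + B <= pi ->
  sin C * sin D < sin A * sin B.
Proof.
move=> A0 AB C0 gap Dpi sum sumpi.
have cos_gap : cos (D - C) < cos (B - A).
  by rewrite ltr_cos ?in_itv /=; [|apply/andP; split; lra..].
have cos_sum : cos (A + B) <= cos (C + D).
  by rewrite leNgt ltr_cos ?in_itv /= -?leNgt //; apply/andP; split; lra.
have prodAB : 2 * (sin A * sin B) = cos (B - A) - cos (A + B).
  by rewrite cosB cosD; ring.
have prodCD : 2 * (sin C * sin D) = cos (D - C) - cos (C + D).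
  by rewrite cosB cosD; ring.
lra.
Qed.

(* Under the same hypotheses C and D lie in [0, pi], so sin C sin D >= 0 and
   the strict inequality survives squaring. *)
Lemma sin_sqr_mul_lt (A B C D : R) :
  0 <= A -> A <= B -> 0 <= C -> B - A < D - C -> D - C <= pi ->
  C + D <= A + B -> A + B <= pi ->
  sin C ^+ 2 * sin D ^+ 2 < sin A ^+ 2 * sin B ^+ 2.
Proof.
move=> A0 AB C0 gap Dpi sum sumpi.
have sinC : 0 <= sin C by apply: sin_ge0_pi; apply/andP; split; lra.
have sinD : 0 <= sin D by apply: sin_ge0_pi; apply/andP; split; lra.
have lt_prod := sin_mul_lt A B C D A0 AB C0 gap Dpi sum sumpi.
have prodCD : 0 <= sin C * sin D by rewrite mulr_ge0.
by rewrite -!exprMn ltrXn2r // (le_trans prodCD) // ltW.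
Qed.

End SineProducts.

Lemma no_overlap_of_small_gap (R : realType) (k i j s t : nat) : (0 < k)%N ->
  (i < j)%N -> (j <= s)%N -> (s < t)%N -> (j + s <= k)%N ->
  (i + t <= j + s)%N -> ~ is_overlap R k i j s t.
Proof.
move=> k0 ij js st sk gap /overlap_sin_sqr; set b := pi / k%:R => E.
have b0 : 0 < b by rewrite divr_gt0 ?pi_gt0 ?ltr0n.
have kb : k%:R * b = pi by rewrite mulrC -mulrA mulVf ?mulr1 // pnatr_eq0 -lt0n.
have scale_le m n : (m <= n)%N -> m%:R * b <= n%:R * b.
  by move=> mn; rewrite ler_pM2r // ler_nat.
have scale_lt m n : (m < n)%N -> m%:R * b < n%:R * b.
  by move=> mn; rewrite ltr_pM2r // ltr_nat.
have scale_ge0 n : 0 <= n%:R * b by rewrite mulr_ge0 // ltW.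
have /scale_lt angle_gap : (s + i < t + j)%N by lia.
have /scale_le angle_span : (t <= i + k)%N by lia.
move: (scale_le _ _ gap) (scale_le _ _ sk) angle_gap angle_span.
rewrite !natrD !mulrDl kb => sum sumpi angle_gap angle_span.
have : sin (i%:R * b) ^+ 2 * sin (t%:R * b) ^+ 2
       < sin (j%:R * b) ^+ 2 * sin (s%:R * b) ^+ 2.
  by apply: sin_sqr_mul_lt; rewrite ?scale_ge0 ?scale_le //; lra.
by rewrite E ltxx.
Qed.

Theorem lemma23 (R : realType) (k i j s t : nat) :
  (4 <= k)%N -> ~~ odd k ->
  in_O R k i j s t ->
  [/\ (0 < i)%N, (i < j)%N, (j <= s)%N, (s < t)%N & (t <= k./2)%N] ->
  (j - i < t - s)%N /\ (j + s < i + t)%N /\ (i + t < k)%N.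
Proof.
move=> k4 _ [overlap _] [i0 ij js st tk].
have halves : (k./2 + k./2 <= k)%N.
  by rewrite addnn -{2}(odd_double_half k) leq_addl.
move: (k./2) tk halves => h tk halves.
have gap : (j - i < t - s)%N.
  rewrite ltnNge; apply/negP => small_gap.
  by apply: (@no_overlap_of_small_gap R k i j s t _ ij js st _ _ overlap); lia.
by split=> //; lia.
Qed.
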